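(* Let $E$ be an ordered Banach space, $I$ an interval, and $f:I\rightarrow E$ a continuous function which is three times differentiable on the interior of $I$. Then $f$ is $3$-convex if and only if $f'''(t)\geq0$ (i.e. $f'''(t)\in E_+$) for all $t$ in the interior of $I$.
   Context: An ordered Banach space is a Banach space $E$ with a closed convex cone $E_+$ such that $E=E_+-E_+$, $(-E_+)\cap E_+=\{0\}$, ordered by $x\leq y$ iff $y-x\in E_+$, and such that $0\leq x\leq y$ implies $\|x\|\leq\|y\|$. A function $f:I\rightarrow E$ is $3$-convex if for all $x_0<x_1<x_2<x_3$ in $I$ the divided difference $[x_0,x_1,x_2,x_3;f]=\sum_{j=0}^{3}\frac{f(x_j)}{\prod_{k\neq j}(x_j-x_k)}$ belongs to $E_+$. Derivatives are taken in the norm of $E$. *)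

From HB Require Import structures.
From mathcomp Require Import all_boot all_order all_algebra.
From mathcomp Require Import all_classical all_reals all_analysis.
Set Implicit Arguments. Unset Strict Implicit. Unset Printing Implicit Defensive.
Import Order.TTheory GRing.Theory Num.Theory.
Import numFieldNormedType.Exports.
Local Open Scope classical_set_scope.
Local Open Scope ring_scope.

(* [P] is the positive cone E_+ of an ordered Banach space structure on the
   Banach space E: a closed convex cone, generating (E = E_+ - E_+), proper
   (E_+ ∩ -E_+ = {0}), with monotone norm (0 <= x <= y -> |x| <= |y|),
   where x <= y means y - x \in E_+. *)
Definition ordered_banach_cone (R : realType) (E : completeNormedModType R)
  (P : set E) : Prop :=
  [/\ closed P,
      (forall (a b : R) (x y : E), 0 <= a -> 0 <= b -> P x -> P y ->
         P (a *: x + b *: y)),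
      (forall z : E, exists x y, [/\ P x, P y & z = x - y]),
      (forall x : E, P x -> P (- x) -> x = 0)
    & (forall x y : E, P x -> P (y - x) -> `|x| <= `|y|)].

Definition divdiff3 (R : realType) (E : normedModType R) (f : R -> E)
  (x0 x1 x2 x3 : R) : E :=
  let s := [:: x0; x1; x2; x3] in
  \sum_(j < 4) (\prod_(k < 4 | k != j) (s`_j - s`_k))^-1 *: f s`_j.

Definition three_convex (R : realType) (E : normedModType R) (P : set E)
  (I : set R) (f : R -> E) : Prop :=
  forall x0 x1 x2 x3, I x0 -> I x1 -> I x2 -> I x3 ->
    x0 < x1 -> x1 < x2 -> x2 < x3 -> P (divdiff3 f x0 x1 x2 x3).

From HB Require Import structures.
From mathcomp Require Import all_boot all_order all_algebra.
From mathcomp Require Import all_classical all_reals all_analysis.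
From mathcomp Require Import ring lra ssrAC.
Import Order.TTheory GRing.Theory Num.Theory.
Import numFieldNormedType.Exports.
Local Open Scope classical_set_scope.
Local Open Scope ring_scope.
Set Implicit Arguments. Unset Strict Implicit. Unset Printing Implicit Defensive.

(* Fix nodes x0 < x1 < x2 < x3 with divided-difference weights w_j, and let T_s be the
   second-order Taylor polynomial of f at s, so that d/ds T_s(x) = (x - s)^2/2 f'''(s).
   Since the weights annihilate quadratics, sum_j w_j T_s(x_j) = 0 for every s, and the
   divided difference telescopes into the increments over [x_k, x_(k+1)] of
   s |-> sum_(j > k) w_j T_s(x_j), whose derivatives are B(s) f'''(s) with B >= 0 the
   quadratic B-spline of the nodes.  Each increment lies in E_+ by a mean value inequality
   for the distance to E_+, a sublinear function vanishing exactly on the closed cone;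
   nodes on the boundary of I are then reached by continuity.  Conversely, the divided
   difference at t, t + h, t + 2h, t + 3h tends to f'''(t)/6 as h -> 0+. *)

Section VectorDerivative.
Variables (R : realType) (E : normedModType R).

Lemma is_derive1 (g : R -> E) (x : R) :
  derivable g x 1 -> is_derive x 1 g (derive1 g x).
Proof. by move=> dg; rewrite derive1E; exact: derivableP. Qed.

Lemma is_derive_scale (k : R -> R) (g : R -> E) (x dk : R) (dg : E) :
  is_derive x 1 k dk -> is_derive x 1 g dg ->
  is_derive x 1 (fun s => k s *: g s) (dk *: g x + k x *: dg).
Proof.
move=> [dk1 <-] [dg1 <-].
have quotient_cvg : (fun h => h^-1 *: (k (h *: 1 + x) *: g (h *: 1 + x) - k x *: g x))
    @ 0^' --> k x *: 'D_1 g x + 'D_1 k x *: g x.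
  have -> : (fun h => h^-1 *: (k (h *: 1 + x) *: g (h *: 1 + x) - k x *: g x)) =
      (fun h => k (h *: 1 + x) *: (h^-1 *: (g (h *: 1 + x) - g x)) +
                (h^-1 * (k (h *: 1 + x) - k x)) *: g x).
    apply/funext => h; rewrite [in RHS]scalerA [in RHS]mulrC.
    rewrite -[in RHS]scalerA -[in RHS]scalerA -scalerDr; congr (_ *: _).
    by rewrite scalerBr scalerBl addrA subrK.
  apply: cvgD; last exact: cvgZ dk1 (cvg_cst _).
  apply: cvg_comp2 (@scale_continuous _ _ (_, _)) => /=; last exact: dg1.
  suff : {for 0, continuous (fun h : R => k (h *: 1 + x))}.
    by move=> /continuous_withinNx; rewrite scale0r add0r.
  exact/differentiable_continuous/derivable1_diffP/(derivable1P _ _ _).1.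
apply: DeriveDef; first by apply/cvg_ex; exists (k x *: 'D_1 g x + 'D_1 k x *: g x).
by rewrite addrC; exact: cvg_lim quotient_cvg.
Qed.

Lemma is_derive_right_approx (g : R -> E) (t : R) (d : E) : is_derive t 1 g d ->
  forall e, 0 < e -> exists2 del, 0 < del &
    forall h, 0 < h < del -> `|g (t + h) - g t - h *: d| <= e * h.
Proof.
move=> [dg <-] e e0.
move: dg => /cvgrPdist_le /(_ e e0); rewrite near_withinE => /nbhs_ballP[del del0 near_t].
exists del => // h /andP[h0 hdel].
have /near_t /(_ (lt0r_neq0 h0)) : ball 0 del h.
  by rewrite /ball /= sub0r normrN gtr0_norm.
rewrite [h *: 1]mulr1 /= [h + t]addrC => approx.
have -> : g (t + h) - g t - h *: 'D_1 g t =
    - (h *: ('D_1 g t - h^-1 *: (g (t + h) - g t))).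
  by rewrite scalerBr scalerA mulfV ?gt_eqF // scale1r opprB.
by rewrite normrN normrZ gtr0_norm // mulrC ler_pM2r.
Qed.

End VectorDerivative.

Lemma real_induction (R : realType) (a b : R) (Q : R -> Prop) : a <= b -> Q a ->
  (forall s, a < s <= b -> (forall u, a <= u < s -> Q u) -> Q s) ->
  (forall s, a <= s < b -> Q s ->
     exists2 d, 0 < d & forall u, s < u < s + d -> Q u) ->
  Q b.
Proof.
move=> ab Qa Qleft Qright.
pose S := [set s | a <= s <= b /\ forall u, a <= u <= s -> Q u].
have Sa : S a.
  split=> [|u /andP[au ua]]; first by rewrite lexx ab.
  by have -> : u = a by apply/le_anti; rewrite ua au.
have supS : has_sup S by split; [exists a | exists b => s [/andP[_]]].
pose c := sup S.
have ac : a <= c by exact: sup_upper_bound.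
have cb : c <= b by apply: ge_sup; [exists a | move=> s [/andP[_]]].
have Qbelow u : a <= u < c -> Q u.
  move=> /andP[au uc].
  have cu0 : 0 < c - u by rewrite subr_gt0.
  have [v [_ Qv] /ltW] := sup_adherent cu0 supS.
  by rewrite opprB subrKC => uv; apply: Qv; rewrite au.
have Sc : S c.
  split=> [|u /andP[au]]; first by rewrite ac cb.
  rewrite le_eqVlt => /orP[/eqP->|uc]; last by apply: Qbelow; rewrite au.
  have [ac'|] := ltP a c; first by apply: Qleft; [rewrite ac' cb | exact: Qbelow].
  by move=> ca; have -> : c = a by apply/le_anti; rewrite ca ac.
have Qc : Q c by apply: Sc.2; rewrite ac lexx.
have [cb'|bc] := ltP c b; last by have <- : c = b by apply/le_anti; rewrite bc cb.
have [|d d0 Qnext] := Qright c _ Qc; first by rewrite ac cb'.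
pose c' := Num.min (c + d / 2) b.
have cc' : c < c' by rewrite lt_min cb' andbT ltrDl divr_gt0.
have Sc' : S c'.
  split=> [|u /andP[au uc']]; first by rewrite (le_trans ac (ltW cc')) ge_min lexx orbT.
  have [uc|cu] := leP u c; first by apply: Sc.2; rewrite au.
  apply: Qnext; rewrite cu (le_lt_trans uc') // gt_min ltrD2l.
  by rewrite ltr_pdivrMr // ltr_pMr // ltr1n.
by have := sup_upper_bound supS Sc'; rewrite leNgt cc'.
Qed.

Section SublinearMeanValue.
Variables (R : realType) (E : normedModType R) (phi : E -> R).
Hypothesis phiD : forall x y, phi (x + y) <= phi x + phi y.
Hypothesis phiZ : forall k x, 0 < k -> phi (k *: x) <= k * phi x.
Hypothesis phi_le_norm : forall x, phi x <= `|x|.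

Lemma sublinear_lipschitz x y : `|phi x - phi y| <= `|x - y|.
Proof.
have phi_le x' y' : phi x' <= phi y' + `|x' - y'|.
  by rewrite -{1}(subrK y' x') addrC (le_trans (phiD _ _)) // lerD2l.
by rewrite ler_norml lerBlDl phi_le lerNl opprB lerBlDl distrC phi_le.
Qed.

Lemma sublinear_continuous : continuous phi.
Proof.
move=> x; apply/cvgrPdist_le => eta eta0; near=> y.
apply: le_trans (sublinear_lipschitz x y) _.
by near: y; apply: cvgr_dist_le => //; exact: cvg_id.
Unshelve. all: by end_near.
Qed.

Lemma sublinear_mean_value (g dg : R -> E) (a b M : R) : a <= b ->
  (forall s, a <= s <= b -> is_derive s 1 g (dg s)) ->
  (forall s, a <= s <= b -> phi (dg s) <= M) ->
  phi (g b - g a) <= M * (b - a).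
Proof.
move=> ab gd gM.
suff slack e : 0 < e -> phi (g b - g a) <= (M + e) * (b - a).
  apply/ler_addgt0Pr => e e0.
  have ba1 : 0 < b - a + 1 by rewrite ltr_wpDl ?subr_ge0.
  apply: le_trans (slack _ (divr_gt0 e0 ba1)) _.
  by rewrite mulrDl lerD2l mulrAC ler_pdivrMr // ler_pM2l // lerDl ler01.
move=> e0; pose K := M + e.
pose Q u := phi (g u - g a) <= K * (u - a).
apply: (@real_induction _ a b Q ab).
- by rewrite /Q !subrr mulr0 (le_trans (phi_le_norm 0)) // normr0.
- move=> s /andP[aS sb] Qbelow.
  have gs : {for s, continuous g}.
    have [|dgs _] := gd s; first by rewrite (ltW aS) sb.
    exact/differentiable_continuous/derivable1_diffP.
  pose psi u := phi (g u - g a) - K * (u - a).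
  have psi_cont : psi @ s --> psi s.
    apply: cvgB; first apply: (@continuous_comp _ _ _ (fun u => g u - g a) phi).
    - exact: cvgB gs (cvg_cst _).
    - exact: sublinear_continuous.
    by apply: cvgM; [exact: cvg_cst | apply: cvgB; [exact: cvg_id | exact: cvg_cst]].
  have psi_left := cvg_at_left_filter psi_cont.
  rewrite /Q -subr_le0 -/(psi s).
  apply: (@closed_cvg _ _ _ _ psi (fun x : R => x <= 0) (@closed_le _ 0) _ _ psi_left).
  rewrite near_withinE; near=> u => us; rewrite subr_le0; apply: Qbelow.
  by rewrite us andbT; apply: ltW; near: u; exact: lt_nbhsr.
- move=> s /andP[aS sb] Qs.
  have gds : is_derive s 1 g (dg s) by apply: gd; rewrite aS ltW.
  have [del del0 approx] := is_derive_right_approx gds e0.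
  exists del => // u /andP[su usd].
  have us0 : 0 < u - s by rewrite subr_gt0.
  have := approx (u - s); rewrite subrKC us0 ltrBlDl => /(_ usd) err.
  rewrite /Q; set r := g u - g s - (u - s) *: dg s.
  have -> : g u - g a = (g s - g a) + ((u - s) *: dg s + r).
    by rewrite /r; set w := _ *: dg s; rewrite [w + _]addrC subrK [RHS]addrC addrA subrK.
  have -> : K * (u - a) = K * (s - a) + (M * (u - s) + e * (u - s)) by rewrite /K; ring.
  apply: le_trans (phiD _ _) (lerD Qs _).
  apply: le_trans (phiD _ _) (lerD _ (le_trans (phi_le_norm _) err)).
  apply: le_trans (phiZ _ us0) _; rewrite mulrC ler_pM2r //.
  by apply: gM; rewrite aS ltW.
Unshelve. all: by end_near.
Qed.

End SublinearMeanValue.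

Lemma norm_mean_value (R : realType) (E : normedModType R) (g dg : R -> E) (a b M : R) :
  a <= b ->
  (forall s, a <= s <= b -> is_derive s 1 g (dg s)) ->
  (forall s, a <= s <= b -> `|dg s| <= M) ->
  `|g b - g a| <= M * (b - a).
Proof.
apply: sublinear_mean_value => [|k x k0|//]; first exact: ler_normD.
by rewrite normrZ gtr0_norm.
Qed.

Section ConeDistance.
Variables (R : realType) (E : normedModType R) (P : set E).
Hypothesis P0 : P 0.
Hypothesis PD : forall x y, P x -> P y -> P (x + y).
Hypothesis PZ : forall k x, 0 <= k -> P x -> P (k *: x).

Definition cone_dist (x : E) : R := inf [set `|x - p| | p in P].

Let has_inf_dist x : has_inf [set `|x - p| | p in P].
Proof. by split; [exists `|x - 0|, 0 | exists 0 => _ [p _ <-]]. Qed.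

Lemma cone_dist_le x p : P p -> cone_dist x <= `|x - p|.
Proof. by move=> Pp; apply: ge_inf; [exact: (has_inf_dist x).2 | exists p]. Qed.

Lemma cone_dist_le_norm x : cone_dist x <= `|x|.
Proof. by have := cone_dist_le x P0; rewrite subr0. Qed.

Lemma cone_dist_le0 x : P x -> cone_dist x <= 0.
Proof. by move=> Px; have := cone_dist_le x Px; rewrite subrr normr0. Qed.

Lemma cone_dist_approx x e : 0 < e -> exists2 p, P p & `|x - p| < cone_dist x + e.
Proof. by move=> e0; have [_ [p Pp <-]] := inf_adherent e0 (has_inf_dist x); exists p. Qed.

Lemma cone_distD x y : cone_dist (x + y) <= cone_dist x + cone_dist y.
Proof.
apply/ler_addgt0Pr => e e0.
have e20 : 0 < e / 2 by rewrite divr_gt0.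
have [p Pp xp] := cone_dist_approx x e20.
have [q Pq yq] := cone_dist_approx y e20.
apply: le_trans (cone_dist_le _ (PD Pp Pq)) _.
have -> : x + y - (p + q) = (x - p) + (y - q) by rewrite opprD addrACA.
rewrite (le_trans (ler_normD _ _)) // (splitr e) addrACA.
by rewrite lerD // ltW.
Qed.

Lemma cone_distZ k x : 0 < k -> cone_dist (k *: x) <= k * cone_dist x.
Proof.
move=> k0; apply/ler_addgt0Pr => e e0.
have [p Pp xp] := cone_dist_approx x (divr_gt0 e0 k0).
apply: le_trans (cone_dist_le _ (PZ (ltW k0) Pp)) _.
have -> : k * cone_dist x + e = k * (cone_dist x + e / k).
  by rewrite mulrDr mulrCA mulfV ?gt_eqF // mulr1.
by rewrite -scalerBr normrZ gtr0_norm // ler_pM2l // ltW.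
Qed.

Hypothesis Pcl : closed P.

Lemma cone_dist_le0P x : cone_dist x <= 0 -> P x.
Proof.
move=> dx; apply: contrapT => notPx.
have /nbhs_ballP[r r0 ballP] : nbhs x (~` P).
  by apply: open_nbhs_nbhs; split => //; exact: closed_openC.
have [p Pp xp] := cone_dist_approx x r0.
apply: (ballP p) => //; rewrite -ball_normE /ball_ /=.
by apply: lt_le_trans xp _; rewrite gerDr.
Qed.

End ConeDistance.

Ltac neq_by_lra := repeat (apply/andP; split);
  rewrite ?subr_eq0 neq_lt; apply/orP; first [left; lra | right; lra].

Section DividedDifference.
Variable R : realType.

Definition dd_weight (x0 x1 x2 x3 : R) : R := ((x0 - x1) * (x0 - x2) * (x0 - x3))^-1.

Lemma divdiff3E {E : normedModType R} (f : R -> E) x0 x1 x2 x3 :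
  divdiff3 f x0 x1 x2 x3 =
    dd_weight x0 x1 x2 x3 *: f x0 + dd_weight x1 x0 x2 x3 *: f x1 +
    dd_weight x2 x0 x1 x3 *: f x2 + dd_weight x3 x0 x1 x2 *: f x3.
Proof.
rewrite /divdiff3 !big_ord_recr big_ord0 /= add0r.
rewrite !(big_mkcond (fun k : 'I_4 => k != _)) /= !big_ord_recr big_ord0 /=.
by rewrite !mul1r !big_ord0 !mul1r !mulr1.
Qed.

Lemma divdiff3D {E : normedModType R} (f g : R -> E) x0 x1 x2 x3 :
  divdiff3 (fun x => f x + g x) x0 x1 x2 x3 =
    divdiff3 f x0 x1 x2 x3 + divdiff3 g x0 x1 x2 x3.
Proof. by rewrite /divdiff3 -big_split; apply: eq_bigr => j _; rewrite scalerDr. Qed.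

Lemma divdiff3B {E : normedModType R} (f g : R -> E) x0 x1 x2 x3 :
  divdiff3 (fun x => f x - g x) x0 x1 x2 x3 =
    divdiff3 f x0 x1 x2 x3 - divdiff3 g x0 x1 x2 x3.
Proof. by rewrite /divdiff3 -sumrB; apply: eq_bigr => j _; rewrite scalerBr. Qed.

Definition cubic {E : normedModType R} (t : R) (a b c d : E) (x : R) : E :=
  a + (x - t) *: b + (x - t) ^+ 2 *: c + (x - t) ^+ 3 *: d.

Lemma is_derive_shift_pow (t x : R) (n : nat) :
  is_derive x 1 (fun y : R => (y - t) ^+ n.+1) (n.+1%:R * (x - t) ^+ n).
Proof.
have -> : (fun y : R => (y - t) ^+ n.+1) = (@id R - cst t) ^+ n.+1 by rewrite exprfctE.
apply: is_derive_eq.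
by rewrite subr0 -[_ *: _]/(_ * _) mulr1.
Qed.

Lemma is_derive_cubic {E : normedModType R} (t : R) (a b c d : E) (x : R) :
  is_derive x 1 (cubic t a b c d) (cubic t b (2 *: c) (3 *: d) 0 x).
Proof.
have dmono n (v : E) :
    is_derive x 1 (fun y => (y - t) ^+ n.+1 *: v) ((n.+1%:R * (x - t) ^+ n) *: v).
  have := is_derive_scale (is_derive_shift_pow t x n) (is_derive_cst v x 1).
  by rewrite scaler0 addr0.
apply: is_derive_eq (is_deriveD (is_deriveD (is_deriveD (is_derive_cst a x 1)
  (dmono 0%N b)) (dmono 1%N c)) (dmono 2%N d)) _.
rewrite /cubic add0r expr0 mulr1 scale1r expr1 scaler0 addr0 !scalerA.
by rewrite [(x - t) * _]mulrC [(x - t) ^+ 2 * _]mulrC.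
Qed.

Lemma cubic_at {E : normedModType R} (t : R) (a b c d : E) : cubic t a b c d t = a.
Proof. by rewrite /cubic subrr !expr0n /= !scale0r !addr0. Qed.

Section OrderedNodes.
Variables (x0 x1 x2 x3 : R).
Hypotheses (x01 : x0 < x1) (x12 : x1 < x2) (x23 : x2 < x3).

Lemma dd_weight_moment (t : R) (k : nat) : (k <= 3)%N ->
  dd_weight x0 x1 x2 x3 * (x0 - t) ^+ k + dd_weight x1 x0 x2 x3 * (x1 - t) ^+ k +
  dd_weight x2 x0 x1 x3 * (x2 - t) ^+ k + dd_weight x3 x0 x1 x2 * (x3 - t) ^+ k =
  (k == 3)%:R.
Proof.
(* [lra] ignores section hypotheses, hence the [move:] of the node order here and below. *)
rewrite /dd_weight => k3; move: x01 x12 x23 => *.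
by case: k k3 => [|[|[|[|k]]]] //= _; field; neq_by_lra.
Qed.

Lemma divdiff3_monomial {E : normedModType R} (t : R) (k : nat) (v : E) : (k <= 3)%N ->
  divdiff3 (fun x => (x - t) ^+ k *: v) x0 x1 x2 x3 = (k == 3)%:R *: v.
Proof. by move=> k3; rewrite divdiff3E !scalerA -!scalerDl dd_weight_moment. Qed.

Lemma divdiff3_cst {E : normedModType R} (v : E) : divdiff3 (fun=> v) x0 x1 x2 x3 = 0.
Proof.
have := divdiff3_monomial 0 v (isT : (0 <= 3)%N).
by rewrite scale0r; under eq_fun do rewrite expr0 scale1r.
Qed.

Lemma divdiff3_cubic {E : normedModType R} (t : R) (a b c d : E) :
  divdiff3 (cubic t a b c d) x0 x1 x2 x3 = d.
Proof.
rewrite /cubic !divdiff3D divdiff3_cst (@divdiff3_monomial _ t 1 b) //.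
by rewrite !divdiff3_monomial // !scale0r scale1r !add0r.
Qed.

Lemma dd_weight_first_lt0 : dd_weight x0 x1 x2 x3 < 0.
Proof.
move: x01 x12 x23 => *.
have pos : 0 < (x0 - x1) * (x0 - x2) by rewrite nmulr_rgt0 subr_lt0 //; lra.
by rewrite invr_lt0 pmulr_rlt0 // subr_lt0; lra.
Qed.

Lemma dd_weight_last_gt0 : 0 < dd_weight x3 x0 x1 x2.
Proof. by move: x01 x12 x23 => *; rewrite invr_gt0 !mulr_gt0 // subr_gt0; lra. Qed.

Lemma dd_weight_last_two_le0 : dd_weight x2 x0 x1 x3 + dd_weight x3 x0 x1 x2 <= 0.
Proof.
move: x01 x12 x23 => *.
have -> : dd_weight x2 x0 x1 x3 = - ((x2 - x0) * (x2 - x1) * (x3 - x2))^-1.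
  by rewrite /dd_weight -invrN; congr (_^-1); ring.
rewrite addrC subr_le0 lef_pV2 ?posrE ?mulr_gt0 ?subr_gt0 //; try lra.
rewrite ler_pM2r ?subr_gt0 //.
by apply: ler_pM; rewrite ?subr_ge0 ?lerD2r //; lra.
Qed.

End OrderedNodes.
End DividedDifference.

Section Taylor2.
Variables (R : realType) (E : normedModType R).

Definition taylor2 (f : R -> E) (s x : R) : E :=
  f s + (x - s) *: derive1 f s + ((x - s) ^+ 2 / 2) *: derive1n 2 f s.

Lemma taylor2_cubic (f : R -> E) (s : R) :
  taylor2 f s = cubic s (f s) (derive1 f s) (2^-1 *: derive1n 2 f s) 0.
Proof.
by apply/funext => x; rewrite /taylor2 /cubic scaler0 addr0 scalerA mulrC.
Qed.

Lemma taylor2_at (f : R -> E) (x : R) : taylor2 f x x = f x.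
Proof. by rewrite /taylor2 subrr expr0n /= mul0r !scale0r !addr0. Qed.

Lemma is_derive_taylor2_base (f : R -> E) (x s : R) :
  derivable f s 1 -> derivable (derive1 f) s 1 -> derivable (derive1n 2 f) s 1 ->
  is_derive s 1 (fun s => taylor2 f s x) (((x - s) ^+ 2 / 2) *: derive1n 3 f s).
Proof.
move=> d0 d1 d2.
have dlin : is_derive s 1 (fun y : R => x - y) (-1).
  by apply: is_derive_eq (is_deriveB (is_derive_cst x s 1) (is_derive_id s 1)) _; rewrite sub0r.
have dsq : is_derive s 1 (fun y : R => (x - y) ^+ 2 / 2) (- (x - s)).
  have -> : (fun y : R => (x - y) ^+ 2 / 2) = 2^-1 \*: (fun y => (y - x) ^+ 2).
    by apply/funext => y; rewrite /= -sqrrN opprB mulrC.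
  apply: is_derive_eq (is_deriveZ _ (is_derive_shift_pow x s 1)) _.
  by rewrite -[_ *: _]/(_ * _) expr1 mulrA mulVf // mul1r opprB.
apply: is_derive_eq (is_deriveD (is_deriveD (is_derive1 d0)
  (is_derive_scale dlin (is_derive1 d1))) (is_derive_scale dsq (is_derive1 d2))) _.
by rewrite scaleN1r scaleNr addNKr addNKr.
Qed.

End Taylor2.

Lemma concave_quadratic_ge0 (R : realType) (c1 c2 y1 y2 a b s : R) :
  c1 + c2 <= 0 -> a <= s <= b ->
  0 <= c1 * (y1 - a) ^+ 2 + c2 * (y2 - a) ^+ 2 ->
  0 <= c1 * (y1 - b) ^+ 2 + c2 * (y2 - b) ^+ 2 ->
  0 <= c1 * (y1 - s) ^+ 2 + c2 * (y2 - s) ^+ 2.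
Proof.
move=> c12 /andP[a_s sb] Qa Qb.
have [ab|ba] := ltP a b; last by have -> : s = a by apply/le_anti; rewrite (le_trans sb).
set Q := fun u => c1 * (y1 - u) ^+ 2 + c2 * (y2 - u) ^+ 2.
have interp : (b - a) * Q s =
    (b - s) * Q a + (s - a) * Q b + - (c1 + c2) * (b - a) * ((s - a) * (b - s)).
  by rewrite /Q; ring.
have ba0 : 0 < b - a by rewrite subr_gt0.
rewrite -(pmulr_rge0 _ ba0) -/(Q s) interp.
have Hc : 0 <= - (c1 + c2) * (b - a) * ((s - a) * (b - s)).
  by rewrite !mulr_ge0 ?oppr_ge0 ?subr_ge0 // ltW.
by apply: addr_ge0 Hc; apply: addr_ge0; apply: mulr_ge0; rewrite ?subr_ge0.
Qed.

Section TaylorCombination.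
Variables (R : realType) (E : normedModType R) (P : set E) (f : R -> E).

Definition taylor2_comb (c : seq (R * R)) (s : R) : E :=
  \sum_(p <- c) p.1 *: taylor2 f s p.2.

Definition peano_kernel (c : seq (R * R)) (s : R) : R :=
  \sum_(p <- c) p.1 / 2 * (p.2 - s) ^+ 2.

Lemma taylor2_comb_cons w y c s :
  taylor2_comb ((w, y) :: c) s = w *: taylor2 f s y + taylor2_comb c s.
Proof. by rewrite /taylor2_comb big_cons. Qed.

Lemma peano_kernel_cons_at w y c : peano_kernel ((w, y) :: c) y = peano_kernel c y.
Proof. by rewrite /peano_kernel big_cons /= subrr expr0n mulr0 add0r. Qed.

Lemma is_derive_taylor2_comb c s :
  derivable f s 1 -> derivable (derive1 f) s 1 -> derivable (derive1n 2 f) s 1 ->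
  is_derive s 1 (taylor2_comb c) (peano_kernel c s *: derive1n 3 f s).
Proof.
move=> d0 d1 d2; elim: c => [|[w y] c IH].
  rewrite /peano_kernel big_nil scale0r.
  have -> : taylor2_comb [::] = cst 0 by apply/funext => u; rewrite /taylor2_comb big_nil.
  exact: is_derive_cst.
have -> : taylor2_comb ((w, y) :: c) = fun u => w *: taylor2 f u y + taylor2_comb c u.
  by apply/funext => u; exact: taylor2_comb_cons.
apply: is_derive_eq (is_deriveD (is_deriveZ w (is_derive_taylor2_base y d0 d1 d2)) IH) _.
by rewrite /peano_kernel big_cons scalerDl scalerA /= mulrA mulrAC.
Qed.

Hypothesis P0 : P 0.
Hypothesis PD : forall x y, P x -> P y -> P (x + y).
Hypothesis PZ : forall k x, 0 <= k -> P x -> P (k *: x).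
Hypothesis Pcl : closed P.

Lemma taylor2_comb_increment c a b : a <= b ->
  (forall s, a <= s <= b -> [/\ derivable f s 1, derivable (derive1 f) s 1,
                               derivable (derive1n 2 f) s 1 & P (derive1n 3 f s)]) ->
  (forall s, a <= s <= b -> 0 <= peano_kernel c s) ->
  P (taylor2_comb c b - taylor2_comb c a).
Proof.
move=> ab hf hK; apply: (cone_dist_le0P P0 Pcl).
rewrite -(mul0r (b - a)); apply: (sublinear_mean_value (cone_distD P0 PD)
  (cone_distZ P0 PZ) (cone_dist_le_norm P0) ab) => s sab.
  by have [d0 d1 d2 _] := hf s sab; exact: is_derive_taylor2_comb.
have [_ _ _ f3P] := hf s sab.
exact/(cone_dist_le0 P0)/PZ/f3P/hK.
Qed.

End TaylorCombination.

Lemma telescope4 (V : zmodType) (u0 u1 u2 u3 a b : V) :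
  u0 + u1 + u2 + u3 = (u3 - a) + (u2 + a - b) + (u1 + b + u0).
Proof.
rewrite !addrA [_ - a + _]addrAC subrK [_ - b + _]addrAC subrK.
by rewrite [RHS](ACl (4*3*2*1)).
Qed.

Section DivdiffCone.
Variables (R : realType) (E : normedModType R) (P : set E) (f : R -> E).
Variables (x0 x1 x2 x3 : R).
Hypotheses (x01 : x0 < x1) (x12 : x1 < x2) (x23 : x2 < x3).

Let W0 := dd_weight x0 x1 x2 x3.
Let W1 := dd_weight x1 x0 x2 x3.
Let W2 := dd_weight x2 x0 x1 x3.
Let W3 := dd_weight x3 x0 x1 x2.
Let c3 := [:: (W3, x3)].
Let c2 := (W2, x2) :: c3.
Let c1 := (W1, x1) :: c2.

Let taylor2_comb_full s : taylor2_comb f ((W0, x0) :: c1) s = 0.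
Proof.
rewrite !taylor2_comb_cons /taylor2_comb big_nil addr0 !addrA.
by rewrite -(divdiff3E (taylor2 f s)) taylor2_cubic divdiff3_cubic.
Qed.

Let peano_kernel_full s : peano_kernel ((W0, x0) :: c1) s = 0.
Proof.
have -> : peano_kernel ((W0, x0) :: c1) s =
    2^-1 * (W0 * (x0 - s) ^+ 2 + W1 * (x1 - s) ^+ 2 + W2 * (x2 - s) ^+ 2 + W3 * (x3 - s) ^+ 2).
  by rewrite /peano_kernel !big_cons big_nil /=; ring.
by rewrite dd_weight_moment // mulr0.
Qed.

Lemma divdiff3_telescope :
  divdiff3 f x0 x1 x2 x3 =
    (taylor2_comb f c3 x3 - taylor2_comb f c3 x2) +
    (taylor2_comb f c2 x2 - taylor2_comb f c2 x1) +
    (taylor2_comb f c1 x1 - taylor2_comb f c1 x0).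
Proof.
have := taylor2_comb_full x0; rewrite taylor2_comb_cons taylor2_at addrC => /eqP.
rewrite addr_eq0 => /eqP ->; rewrite divdiff3E opprK.
rewrite [in taylor2_comb f c1 x1]taylor2_comb_cons [in taylor2_comb f c2 x2]taylor2_comb_cons.
rewrite [in taylor2_comb f c3 x3]taylor2_comb_cons !taylor2_at /taylor2_comb big_nil addr0.
exact: telescope4.
Qed.

Hypothesis P0 : P 0.
Hypothesis PD : forall x y, P x -> P y -> P (x + y).
Hypothesis PZ : forall k x, 0 <= k -> P x -> P (k *: x).
Hypothesis Pcl : closed P.

Lemma divdiff3_in_cone :
  (forall s, x0 <= s <= x3 -> [/\ derivable f s 1, derivable (derive1 f) s 1,
                                 derivable (derive1n 2 f) s 1 & P (derive1n 3 f s)]) ->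
  P (divdiff3 f x0 x1 x2 x3).
Proof.
move=> hf; move: x01 x12 x23 => *.
have kernel3 s : 0 <= peano_kernel c3 s.
  rewrite /peano_kernel big_cons big_nil addr0 mulr_ge0 ?sqr_ge0 ?divr_ge0 //.
  exact/ltW/dd_weight_last_gt0.
have kernel1 s : 0 <= peano_kernel c1 s.
  have := peano_kernel_full s; rewrite /peano_kernel big_cons /= addrC => /eqP.
  rewrite addr_eq0 => /eqP ->; rewrite oppr_ge0 mulr_le0_ge0 ?sqr_ge0 // pmulr_lle0 ?invr_gt0 //.
  exact/ltW/dd_weight_first_lt0.
have kernel2 s : x1 <= s <= x2 -> 0 <= peano_kernel c2 s.
  have kernel2E u : peano_kernel c2 u = W2 / 2 * (x2 - u) ^+ 2 + W3 / 2 * (x3 - u) ^+ 2.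
    by rewrite /peano_kernel !big_cons big_nil addr0.
  move=> s12; rewrite kernel2E; apply: (concave_quadratic_ge0 _ s12); rewrite -?kernel2E.
  - by rewrite -mulrDl pmulr_lle0 ?invr_gt0 // dd_weight_last_two_le0.
  - by have := kernel1 x1; rewrite /c1 peano_kernel_cons_at.
  - by rewrite /c2 peano_kernel_cons_at.
have increment c a b : (forall s, a <= s <= b -> 0 <= peano_kernel c s) ->
    x0 <= a -> a < b -> b <= x3 -> P (taylor2_comb f c b - taylor2_comb f c a).
  move=> kernel_ge0 x0a ab bx3; apply: (taylor2_comb_increment P0 PD PZ Pcl (ltW ab)) => //.
  by move=> s /andP[? ?]; apply: hf; apply/andP; split; lra.
rewrite divdiff3_telescope; apply: PD; first apply: PD.
- by apply: (increment _ _ _ (fun s _ => kernel3 s)); lra.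
- by apply: (increment _ _ _ kernel2); lra.
- by apply: (increment _ _ _ (fun s _ => kernel1 s)); lra.
Qed.

End DivdiffCone.

Section EquispacedLimit.
Variables (R : realType) (E : normedModType R).

Lemma norm_le_pow_of_derive (g dg : R -> E) (t rho e : R) (n : nat) :
  0 <= e -> g t = 0 ->
  (forall s, t <= s <= t + rho -> is_derive s 1 g (dg s)) ->
  (forall y, 0 <= y <= rho -> `|dg (t + y)| <= e * y ^+ n) ->
  forall y, 0 <= y <= rho -> `|g (t + y)| <= e * y ^+ n.+1.
Proof.
move=> e0 gt0 gd dgb y /andP[y0 yrho].
have := @norm_mean_value R E g dg t (t + y) (e * y ^+ n).
rewrite gt0 subr0 addrAC subrr add0r -mulrA -exprSr; apply; first by rewrite lerDl.
  by move=> s /andP[ts sy]; apply: gd; rewrite ts (le_trans sy) // lerD2l.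
move=> s /andP[ts sy]; rewrite -(subrKC t s).
apply: le_trans (dgb _ _) _; first by rewrite subr_ge0 ts /=; lra.
by rewrite ler_wpM2l // lerXn2r ?nnegrE ?subr_ge0 //; lra.
Qed.

Lemma norm_divdiff3_equispaced (g : R -> E) (t h e : R) : 0 < h -> g t = 0 ->
  (forall y, 0 < y <= 3 * h -> `|g (t + y)| <= e * y ^+ 3) ->
  `|divdiff3 g t (t + h) (t + 2 * h) (t + 3 * h)| <= 9 * e.
Proof.
move=> h0 gt0 gb; rewrite divdiff3E gt0 scaler0 add0r.
have -> : dd_weight (t + h) t (t + 2 * h) (t + 3 * h) = (2 * h ^+ 3)^-1.
  by rewrite /dd_weight; field; neq_by_lra.
have -> : dd_weight (t + 2 * h) t (t + h) (t + 3 * h) = - (2 * h ^+ 3)^-1.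
  by rewrite /dd_weight; field; neq_by_lra.
have -> : dd_weight (t + 3 * h) t (t + h) (t + 2 * h) = (6 * h ^+ 3)^-1.
  by rewrite /dd_weight; field; neq_by_lra.
apply: le_trans (ler_normD _ _) _; apply: le_trans (lerD (ler_normD _ _) (lexx _)) _.
rewrite !normrZ normrN !gtr0_norm ?invr_gt0 ?mulr_gt0 ?exprn_gt0 //.
have -> : 9 * e = (2 * h ^+ 3)^-1 * (e * h ^+ 3) + (2 * h ^+ 3)^-1 * (e * (2 * h) ^+ 3)
                  + (6 * h ^+ 3)^-1 * (e * (3 * h) ^+ 3).
  by field; neq_by_lra.
by do 2 ?apply: lerD; rewrite ler_pM2l ?invr_gt0 ?mulr_gt0 ?exprn_gt0 //; apply: gb; lra.
Qed.

Lemma taylor3_right_remainder (f : R -> E) (t r : R) : 0 < r ->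
  (forall s, t <= s <= t + r -> [/\ derivable f s 1, derivable (derive1 f) s 1
                                  & derivable (derive1n 2 f) s 1]) ->
  forall e, 0 < e -> exists2 rho, 0 < rho & forall y, 0 <= y <= rho ->
    `|f (t + y) - cubic t (f t) (derive1 f t) (2^-1 *: derive1n 2 f t)
                    (6^-1 *: derive1n 3 f t) (t + y)| <= e * y ^+ 3.
Proof.
move=> r0 hf e e0.
set f1 := derive1 f; set f2 := derive1n 2 f; set f3 := derive1n 3 f.
have der s : t <= s <= t + r ->
    [/\ is_derive s 1 f (f1 s), is_derive s 1 f1 (f2 s) & is_derive s 1 f2 (f3 s)].
  by move=> /hf[d0 d1 d2]; split; exact: is_derive1.
pose rem1 s := f2 s - cubic t (f2 t) (f3 t) 0 0 s.
pose rem2 s := f1 s - cubic t (f1 t) (f2 t) (2^-1 *: f3 t) 0 s.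
pose rem3 s := f s - cubic t (f t) (f1 t) (2^-1 *: f2 t) (6^-1 *: f3 t) s.
have rem3_derive s : t <= s <= t + r -> is_derive s 1 rem3 (rem2 s).
  move=> /der[d0 _ _]; apply: is_derive_eq (is_deriveB d0 (is_derive_cubic _ _ _ _ _ s)) _.
  by rewrite /rem2 !scalerA mulfV ?pnatr_eq0 // scale1r (_ : 3 * 6^-1 = 2^-1 :> R) //; field.
have rem2_derive s : t <= s <= t + r -> is_derive s 1 rem2 (rem1 s).
  move=> /der[_ d1 _]; apply: is_derive_eq (is_deriveB d1 (is_derive_cubic _ _ _ _ _ s)) _.
  by rewrite /rem1 scalerA mulfV ?pnatr_eq0 // scale1r scaler0.
have [|_ _ d2t] := der t; first by rewrite lexx lerDl ltW.
have [del del0 approx] := is_derive_right_approx d2t e0.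
pose rho := Num.min (del / 2) r.
have rho_del : rho < del by rewrite gt_min ltr_pdivrMr // ltr_pMr // ltr1n.
have to_r s : t <= s <= t + rho -> t <= s <= t + r.
  by move=> /andP[ts srho]; rewrite ts (le_trans srho) // lerD2l ge_min lexx orbT.
have rem1_bound y : 0 <= y <= rho -> `|rem1 (t + y)| <= e * y ^+ 1.
  move=> /andP[y0 yrho]; have [->|yn0] := eqVneq y 0.
    by rewrite addr0 /rem1 cubic_at subrr normr0 expr1 mulr0.
  have := approx y; rewrite lt_neqAle eq_sym yn0 y0 (le_lt_trans yrho rho_del) => /(_ isT).
  by rewrite /rem1 /cubic [t + y - t]addrAC subrr add0r !scaler0 !addr0 opprD addrA expr1.
have rem2_t : rem2 t = 0 by rewrite /rem2 cubic_at subrr.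
have rem2_bound := norm_le_pow_of_derive (ltW e0) rem2_t
  (fun s hs => rem2_derive s (to_r s hs)) rem1_bound.
exists rho; first by rewrite lt_min r0 divr_gt0.
apply: (norm_le_pow_of_derive (g := rem3)) (ltW e0) _ _ rem2_bound.
  by rewrite /rem3 cubic_at subrr.
by move=> s /to_r; exact: rem3_derive.
Qed.

Lemma divdiff3_equispaced_cvg (f : R -> E) (t r : R) : 0 < r ->
  (forall s, t <= s <= t + r -> [/\ derivable f s 1, derivable (derive1 f) s 1
                                  & derivable (derive1n 2 f) s 1]) ->
  (fun h => divdiff3 f t (t + h) (t + 2 * h) (t + 3 * h)) @ 0^'+ -->
    6^-1 *: derive1n 3 f t.
Proof.
move=> r0 hf; apply/cvgrPdist_le => eta eta0.
have e0 : 0 < eta / 9 by rewrite divr_gt0.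
have [rho rho0 rem_bound] := taylor3_right_remainder r0 hf e0.
set T := cubic t _ _ _ _ in rem_bound.
near=> h.
have h0 : 0 < h by near: h; exact: nbhs_right_gt.
have h_rho : 3 * h <= rho.
  suff : h < rho / 3 by lra.
  by near: h; apply: nbhs_right_lt; rewrite divr_gt0.
have divdiff3_rem : divdiff3 (fun s => f s - T s) t (t + h) (t + 2 * h) (t + 3 * h) =
    divdiff3 f t (t + h) (t + 2 * h) (t + 3 * h) - 6^-1 *: derive1n 3 f t.
  by rewrite divdiff3B divdiff3_cubic //; lra.
have -> : eta = 9 * (eta / 9) by rewrite mulrC divfK // pnatr_eq0.
rewrite distrC -divdiff3_rem.
apply: norm_divdiff3_equispaced => // [|y /andP[y0 yh]]; first by rewrite /T cubic_at subrr.
by apply: rem_bound; rewrite ltW //=; lra.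
Unshelve. all: by end_near.
Qed.

End EquispacedLimit.

Section OuterNodesLimit.
Variables (R : realType) (E : normedModType R).

Lemma cvg_dd_weight (F : set_system R) {FF : ProperFilter F} (a b c d : R -> R)
    (la lb lc ld : R) :
  a @ F --> la -> b @ F --> lb -> c @ F --> lc -> d @ F --> ld ->
  (la - lb) * (la - lc) * (la - ld) != 0 ->
  (fun z => dd_weight (a z) (b z) (c z) (d z)) @ F --> dd_weight la lb lc ld.
Proof.
move=> ca cb cc cd nz; apply: cvgV => //.
by apply: cvgM; [apply: cvgM|]; apply: cvgB.
Qed.

Lemma cvg_divdiff3_outer (f : R -> E) (F : set_system R) {FF : ProperFilter F}
    (u v : R -> R) (lu lv x1 x2 : R) :
  u @ F --> lu -> v @ F --> lv ->
  f \o u @ F --> f lu -> f \o v @ F --> f lv ->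
  lu < x1 -> x1 < x2 -> x2 < lv ->
  (fun z => divdiff3 f (u z) x1 x2 (v z)) @ F --> divdiff3 f lu x1 x2 lv.
Proof.
move=> cu cv cfu cfv *; rewrite divdiff3E; under eq_fun do rewrite divdiff3E.
have cx1 : (fun=> x1) @ F --> x1 by exact: cvg_cst.
have cx2 : (fun=> x2) @ F --> x2 by exact: cvg_cst.
apply: cvgD; [apply: cvgD; [apply: cvgD|]|]; apply: cvgZ;
  try by [exact: cfu | exact: cfv | exact: cvg_cst].
all: by apply: cvg_dd_weight => //; rewrite !mulf_neq0 //; neq_by_lra.
Qed.

End OuterNodesLimit.

Section IntervalInterior.
Variable R : realType.

Lemma interior_between (I : set R) (x y z : R) : is_interval I -> I x -> I z ->
  x < y -> y < z -> interior I y.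
Proof.
move=> iI Ix Iz xy yz; rewrite /interior /=.
near=> w; apply: (iI x z) => //; apply/andP; split; apply: ltW; near: w.
  exact: lt_nbhsr.
exact: lt_nbhsl.
Unshelve. all: by end_near.
Qed.

Lemma interior_right_segment (I : set R) (t : R) : is_interval I -> interior I t ->
  exists2 r, 0 < r & forall s, t <= s <= t + r -> interior I s.
Proof.
move=> iI /nbhs_ballP[r /= r0 ballI].
have I_near y : `|y| < r -> I (t + y).
  by move=> yr; apply: ballI; rewrite -ball_normE /ball_ /= opprD addNKr normrN.
have Il : I (t + - (r / 2)) by apply: I_near; rewrite normrN gtr0_norm ?divr_gt0 //; lra.
have Ir : I (t + r / 2) by apply: I_near; rewrite gtr0_norm ?divr_gt0 //; lra.
exists (r / 4); first by rewrite divr_gt0.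
by move=> s /andP[ts sr]; apply: (interior_between iI Il Ir); lra.
Qed.

End IntervalInterior.

Section ThreeConvexity.
Variables (R : realType) (E : normedModType R) (P : set E) (I : set R) (f : R -> E).
Hypothesis P0 : P 0.
Hypothesis PD : forall x y, P x -> P y -> P (x + y).
Hypothesis PZ : forall k x, 0 <= k -> P x -> P (k *: x).
Hypothesis Pcl : closed P.
Hypothesis iI : is_interval I.
Hypothesis df : forall t, interior I t ->
  [/\ derivable f t 1, derivable (derive1 f) t 1 & derivable (derive1n 2 f) t 1].

Lemma three_convex_derive3 :
  three_convex P I f -> forall t, interior I t -> P (derive1n 3 f t).
Proof.
move=> convex t tI; have [r r0 seg] := interior_right_segment iI tI.
have lim := divdiff3_equispaced_cvg r0 (fun s hs => df (seg s hs)).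
have P_lim : P (6^-1 *: derive1n 3 f t).
  apply: (closed_cvg _ Pcl _ _ lim); near=> h.
  have h0 : 0 < h by near: h; exact: nbhs_right_gt.
  have hr : 3 * h <= r.
    suff : h < r / 3 by lra.
    by near: h; apply: nbhs_right_lt; rewrite divr_gt0.
  have inI y : 0 <= y <= 3 * h -> I (t + y).
    by move=> /andP[y0 yh]; apply: interior_subset; apply: seg; apply/andP; split; lra.
  by apply: (convex _ _ _ _ (interior_subset tI) (inI h _) (inI (2 * h) _) (inI (3 * h) _));
    first [lra | apply/andP; split; lra].
have -> : derive1n 3 f t = 6 *: (6^-1 *: derive1n 3 f t).
  by rewrite scalerA mulfV ?scale1r // pnatr_eq0.
exact: PZ.
Unshelve. all: by end_near.
Qed.

Hypothesis fc : {within I, continuous f}.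

Lemma derive3_three_convex :
  (forall t, interior I t -> P (derive1n 3 f t)) -> three_convex P I f.
Proof.
move=> f3P x0 x1 x2 x3 I0 I1 I2 I3 x01 x12 x23.
have segI a b : I a -> I b -> `[a, b] `<=` I.
  by move=> Ia Ib z; rewrite /= in_itv /= => /andP[az zb]; apply: (iI Ia Ib); rewrite az zb.
have [_ _ f_left] := (continuous_within_itvP _ x23).1 (continuous_subspaceW (segI _ _ I2 I3) fc).
have [_ f_right _] := (continuous_within_itvP _ x01).1 (continuous_subspaceW (segI _ _ I0 I1) fc).
have inner u v : x0 < u -> u < x1 -> x2 < v -> v < x3 -> P (divdiff3 f u x1 x2 v).
  move=> x0u ux1 x2v vx3; apply: divdiff3_in_cone => // s /andP[us sv].
  have sI : interior I s by apply: (interior_between iI I0 I3); lra.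
  by have [? ? ?] := df sI; split => //; exact: f3P.
have left_step u : x0 < u -> u < x1 -> P (divdiff3 f u x1 x2 x3).
  move=> x0u ux1; apply: (closed_cvg _ Pcl _ _ (cvg_divdiff3_outer (cvg_cst u)
    (cvg_at_left_filter (cvg_id : id @ x3 --> x3)) (cvg_cst _) f_left ux1 x12 x23)).
  by near=> v; apply: inner.
apply: (closed_cvg _ Pcl _ _ (cvg_divdiff3_outer
  (cvg_at_right_filter (cvg_id : id @ x0 --> x0)) (cvg_cst x3) f_right (cvg_cst _) x01 x12 x23)).
by near=> u; apply: left_step.
Unshelve. all: by end_near.
Qed.

End ThreeConvexity.

Lemma ordered_banach_coneP (R : realType) (E : completeNormedModType R) (P : set E) :
  ordered_banach_cone P ->
  [/\ closed P, P 0, (forall x y, P x -> P y -> P (x + y))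
    & (forall k x, 0 <= k -> P x -> P (k *: x))].
Proof.
case=> Pcl Pcone Pgen _ _; split=> // [|x y Px Py|k x k0 Px].
- have [x [y [Px _ _]]] := Pgen 0.
  by have := Pcone 0 0 x x (lexx 0) (lexx 0) Px Px; rewrite !scale0r addr0.
- by have := Pcone 1 1 x y ler01 ler01 Px Py; rewrite !scale1r.
- by have := Pcone k 0 x x k0 (lexx 0) Px Px; rewrite scale0r addr0.
Qed.

Theorem theorem10 (R : realType) (E : completeNormedModType R) (P : set E)
  (I : set R) (f : R -> E) :
  ordered_banach_cone P ->
  is_interval I ->
  {within I, continuous f} ->
  (forall t, interior I t ->
     [/\ derivable f t 1, derivable (derive1n 1 f) t 1
       & derivable (derive1n 2 f) t 1]) ->
  (three_convex P I f <-> forall t, interior I t -> P (derive1n 3 f t)).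
Proof.
move=> /ordered_banach_coneP[Pcl P0 PD PZ] iI fc df.
split; first exact: three_convex_derive3.
exact: derive3_three_convex.
Qed.
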